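(* Let $n\ge 3$ and let $x_{i_1,D_1},\dots,x_{i_p,D_p}$ be partial conjugations, regarded as elements of $\mathrm{Out}^0(W_n)$. Then there exists a hypertree $\Theta\in\mathcal{HT}_n$ that carries every one of $x_{i_1,D_1},\dots,x_{i_p,D_p}$ if and only if these partial conjugations pairwise commute in $\mathrm{Out}^0(W_n)$.
   Context: $W_n=\langle a_1,\dots,a_n\mid a_1^2=\dots=a_n^2=1\rangle$ is the free product of $n$ copies of $\mathbb{Z}_2$; $[n]=\{1,\dots,n\}$. For $i\in[n]$ and a nonempty $D\subseteq[n]\setminus\{i\}$, the partial conjugation $x_{i,D}\in\mathrm{Aut}(W_n)$ sends $a_j\mapsto a_ia_ja_i$ for $j\in D$ and fixes $a_j$ for $j\notin D$. $\mathrm{Aut}^0(W_n)$ is the group of automorphisms sending each $a_j$ to a conjugate of itself (generated by partial conjugations), and $\mathrm{Out}^0(W_n)=\mathrm{Aut}^0(W_n)/\mathrm{Inn}(W_n)$. In $\mathrm{Out}^0(W_n)$ one has $x_{i,D}=x_{i,D^c}$ where $D^c=[n]\setminus(D\cup\{i\})$. A hypergraph on $[n]$ is a set $E$ of subsets (hyperedges) of $[n]$, each of size $\ge 2$. A simple walk from $v$ to $v'$ is a sequence $v=v_0,e_1,v_1,\dots,e_p,v_p=v'$ with $\{v_{t-1},v_t\}\subseteq e_t$, the $v_t$ pairwise distinct and the $e_t$ pairwise distinct. A hypertree on $[n]$ is a hypergraph on $[n]$ in which any two vertices are joined by a unique simple walk; $\mathcal{HT}_n$ is the set of hypertrees on $[n]$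 (labeled). A hypertree $\Theta$ carries $x_{i,D}$ if for every $d\in D$ and every $j\in[n]\setminus(D\cup\{i\})$ the simple walk in $\Theta$ from $d$ to $j$ passes through the vertex $i$; this depends only on the class of $x_{i,D}$ in $\mathrm{Out}^0(W_n)$. An element $\alpha\in\mathrm{Out}^0(W_n)$ is carried by $\Theta$ if it is a product of partial conjugations each carried by $\Theta$. *)

From mathcomp Require Import all_boot.
Set Implicit Arguments. Unset Strict Implicit. Unset Printing Implicit Defensive.

(* ---------- The group W_n = Z_2 * ... * Z_2, concretely ----------
   An element of W_n is represented by a word over 'I_n (letter j = a_j).
   Since a_j^2 = 1, the normal form is obtained by cancelling adjacent equal
   letters; [reduce] computes this normal form.  Two words represent the same
   element of W_n iff their reduced forms are equal.  The inverse of a word is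
   its reverse. *)

Fixpoint reduce (n : nat) (w : seq 'I_n) : seq 'I_n :=
  match w with
  | [::] => [::]
  | x :: s =>
      match reduce s with
      | y :: r => if x == y then r else x :: y :: r
      | [::] => [:: x]
      end
  end.

Definition wmul (n : nat) (u v : seq 'I_n) : seq 'I_n := reduce (u ++ v).

Definition ext (n : nat) (f : 'I_n -> seq 'I_n) (w : seq 'I_n) : seq 'I_n :=
  reduce (flatten (map f w)).

Definition pconj_valid (n : nat) (x : 'I_n * {set 'I_n}) : bool :=
  (x.1 \notin x.2) && (x.2 != set0).

Definition pconj_gen (n : nat) (x : 'I_n * {set 'I_n}) (j : 'I_n) : seq 'I_n :=
  if j \in x.2 then [:: x.1; j; x.1] else [:: j].

(* Two automorphisms, given by generator images f g, are equal in Out(W_n)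
   iff they differ by an inner automorphism: there is w in W_n with
   f(a_j) = w g(a_j) w^{-1} for every j. *)
Definition out_eq (n : nat) (f g : 'I_n -> seq 'I_n) : Prop :=
  exists w : seq 'I_n, forall j : 'I_n, reduce (f j) = reduce (w ++ g j ++ rev w).

Definition commute_out (n : nat) (x y : 'I_n * {set 'I_n}) : Prop :=
  out_eq (fun j => ext (pconj_gen x) (pconj_gen y j))
         (fun j => ext (pconj_gen y) (pconj_gen x j)).

Definition hypergraph (n : nat) (E : {set {set 'I_n}}) : bool :=
  [forall e in E, 1 < #|e|].

(* A simple walk v_0, e_1, v_1, ..., e_p, v_p, encoded as the vertex list
   vs = [v_0; ...; v_p] and edge list es = [e_1; ...; e_p]. *)
Definition simple_walk (n : nat) (E : {set {set 'I_n}}) (v v' : 'I_n)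
    (vs : seq 'I_n) (es : seq {set 'I_n}) : Prop :=
  [/\ size vs = (size es).+1,
      head v' vs = v,
      last v vs = v' &
     [/\ uniq vs,
      uniq es,
      all (fun e => e \in E) es &
      forall t, t < size es ->
        (nth v vs t \in nth set0 es t) && (nth v vs t.+1 \in nth set0 es t)]].

Definition hypertree (n : nat) (E : {set {set 'I_n}}) : Prop :=
  hypergraph E /\
  forall v v' : 'I_n,
    exists! p : seq 'I_n * seq {set 'I_n}, simple_walk E v v' p.1 p.2.

Definition carries (n : nat) (E : {set {set 'I_n}}) (x : 'I_n * {set 'I_n}) : Prop :=
  forall d j : 'I_n, d \in x.2 -> j \notin x.2 -> j != x.1 ->
    forall vs es, simple_walk E d j vs es -> x.1 \in vs.

(* For x = x_{i,D}, let far_side x j be the block of the partition {D, D^c}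
   of [n] \ {i} that does not contain j (D itself when j = i).  Partial
   conjugations x = x_{i,D} and y = x_{j,E} with i != j commute in Out^0(W_n)
   iff far_side x j and far_side y i are disjoint: this is a computation on
   generators, using that the centralizer of a_m in W_n is {1, a_m}.

   A hypertree carrying both forces this disjointness: a vertex k in both far
   sides would have i on its walk to j, and j on the part of that walk before i.

   Conversely, pairwise compatible partial conjugations are carried by a tree.
   It is built by induction on a vertex set S that no partial conjugation
   centered outside S splits.  If some x_0 centered in S splits S, choose it and
   one of its blocks A so that |A \cap S| is minimal among all such choices.  By
   compatibility and minimality no partial conjugation centered in A splits S,
   so a vertex l of A \cap S can be removed, and the tree on S \ {l} extended by
   the leaf l attached to the center of x_0. *)

From mathcomp Require Import all_boot zify.
Set Implicit Arguments. Unset Strict Implicit. Unset Printing Implicit Defensive.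

Section ReducedWords.
Variable n : nat.
Implicit Types (u v w r s : seq 'I_n) (a b m : 'I_n).

Definition push a r : seq 'I_n :=
  if r is b :: r' then (if a == b then r' else a :: b :: r') else [:: a].

Lemma reduce_cons a s : reduce (a :: s) = push a (reduce s).
Proof. by []. Qed.

Definition reduced s := sorted (fun a b : 'I_n => a != b) s.

Lemma reduced_push a r : reduced r -> reduced (push a r).
Proof.
case: r => [|b r] //= H; case: ifP => [_|/negbT ne]; last by rewrite /= ne.
by case: r H => //= c r /andP[].
Qed.

Lemma reduced_reduce s : reduced (reduce s).
Proof. by elim: s => //= a s IH; rewrite -/(push _ _); apply: reduced_push. Qed.

Lemma reduce_id s : reduced s -> reduce s = s.
Proof.
elim: s => //= a s IH H.
have Hs : reduced s by case: s H {IH} => //= b s /andP[].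
rewrite (IH Hs); case: s H {IH Hs} => //= b s /andP[ne _].
by rewrite (negbTE ne).
Qed.

Lemma reduceK s : reduce (reduce s) = reduce s.
Proof. exact/reduce_id/reduced_reduce. Qed.

Lemma pushK a r : reduced r -> push a (push a r) = r.
Proof.
case: r => [|b r] /=; first by rewrite eqxx.
case: (eqVneq a b) => [<-|ne] H /=; last by rewrite eqxx.
by case: r H => [|c r] //= /andP[ne _]; rewrite (negbTE ne).
Qed.

Lemma reduce_cat u v : reduce (u ++ v) = foldr push (reduce v) u.
Proof. by elim: u => //= a u ->. Qed.

Lemma reduced_foldr r u : reduced r -> reduced (foldr push r u).
Proof. by move=> H; elim: u => //= a u IH; apply: reduced_push. Qed.

Lemma foldr_push r a s : reduced r ->
  foldr push r (push a s) = push a (foldr push r s).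
Proof.
move=> Hr; case: s => [|b s] //=; case: ifP => [/eqP <-|] //=.
by rewrite pushK //; apply: reduced_foldr.
Qed.

Lemma foldr_reduce r u : reduced r -> foldr push r (reduce u) = foldr push r u.
Proof.
by move=> Hr; elim: u => //= a u IH; rewrite -/(push _ _) foldr_push // IH.
Qed.

Lemma reduce_catl u v : reduce (reduce u ++ v) = reduce (u ++ v).
Proof. by rewrite !reduce_cat foldr_reduce // reduced_reduce. Qed.

Lemma reduce_catr u v : reduce (u ++ reduce v) = reduce (u ++ v).
Proof. by rewrite !reduce_cat reduceK. Qed.

Lemma reduce_catxx u a v : reduce (u ++ a :: a :: v) = reduce (u ++ v).
Proof.
by rewrite -reduce_catr !reduce_cons pushK ?reduced_reduce // reduce_catr.
Qed.

Lemma reduced_rev s : reduced (rev s) = reduced s.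
Proof.
rewrite /reduced rev_sorted; case: s => //= a s; apply: eq_path => b c /=.
by rewrite eq_sym.
Qed.

Lemma reduced_rcons r a : reduced (rcons r a) -> reduced r.
Proof.
by rewrite -reduced_rev rev_rcons -(reduced_rev r); case: (rev r) => //= b s /andP[].
Qed.

Lemma rev_push a r : reduced r ->
  reduce (rev (push a r)) = reduce (rev r ++ [:: a]).
Proof.
case: r => [|b r] //= H; case: ifP => [/eqP <-|_]; last by rewrite rev_cons cats1.
by rewrite rev_cons -cats1 -catA /= reduce_catxx cats0.
Qed.

Lemma reduce_rev u : reduce (rev u) = rev (reduce u).
Proof.
elim: u => //= a u IH.
rewrite rev_cons -cats1 -reduce_catl IH -rev_push ?reduced_reduce //.
by rewrite -/(push _ _) reduce_id // reduced_rev reduced_push // reduced_reduce.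
Qed.

Lemma reduce_conj w g :
  reduce (w ++ g ++ rev w) = reduce (reduce w ++ g ++ rev (reduce w)).
Proof.
rewrite -reduce_catl -[LHS]reduce_catr -[RHS]reduce_catr.
by rewrite -(reduce_catr g (rev w)) reduce_rev.
Qed.

Lemma reduced_conj r m : reduced (r ++ m :: rev r) = reduced (m :: rev r).
Proof.
by rewrite /reduced sorted_cat_cons -/(reduced _) -reduced_rev rev_rcons /= andbb.
Qed.

(* The conjugate is already reduced, hence of length at least 3. *)
Lemma conj_gen_neq r c m : reduced (rcons r c) -> c != m ->
  reduce (rcons r c ++ m :: rev (rcons r c)) != [:: m].
Proof.
move=> Hr cm; rewrite reduce_id; last first.
  rewrite reduced_conj; move: Hr; rewrite -reduced_rev !rev_rcons => Hr.
  by rewrite /= eq_sym cm.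
apply/eqP => /(congr1 size); rewrite size_cat /= size_rev size_rcons.
by rewrite addSn addnS; case.
Qed.

Lemma centralizer_gen w m : reduce (w ++ m :: rev w) = [:: m] ->
  reduce w = [::] \/ reduce w = [:: m].
Proof.
rewrite (reduce_conj w [:: m]); have := reduced_reduce w.
case/lastP: (reduce w) => [|r b]; first by left.
move=> Hr; have [Ebm|bm] := eqVneq b m; last first.
  by move/eqP; rewrite (negbTE (conj_gen_neq Hr bm)).
subst b; rewrite rev_rcons -cats1 -catA /= reduce_catxx.
have Hr1 := reduced_rcons Hr.
case/lastP: r Hr Hr1 => [|r c] Hr Hr1; first by right.
have cm : c != m by move: Hr; rewrite -reduced_rev !rev_rcons /= eq_sym => /andP[].
by move/eqP; rewrite (negbTE (conj_gen_neq Hr1 cm)).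
Qed.

End ReducedWords.

Ltac simpl_words := repeat (first [
  match goal with
  | H : (?a \in ?S) = _ |- context [?a \in ?S] => rewrite H
  | H : is_true (?a \in ?S) |- context [?a \in ?S] => rewrite H
  | H : is_true (?a \notin ?S) |- context [?a \in ?S] => rewrite (negbTE H)
  | H : is_true (?a != ?b) |- context [?a == ?b] => rewrite (negbTE H)
  | H : is_true (?a != ?b) |- context [?b == ?a] => rewrite (eq_sym b a) (negbTE H)
  | |- context [?a == ?a] => rewrite eqxx
  end | progress rewrite /= ]).

(* Evaluates explicit images of generators, then refutes a remaining equation
   between distinct explicit words letter by letter. *)
Ltac eval_words :=
  simpl_words; try (move=> /eqP; rewrite ?eqseq_cons; simpl_words; done).

Section Commutation.
Variable n : nat.
Implicit Types (x y : 'I_n * {set 'I_n}).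

Definition far_side x (j : 'I_n) : {set 'I_n} :=
  [set k | (k != x.1) && ((k \in x.2) != (j \in x.2))].

Lemma mem_far_side x j k :
  (k \in far_side x j) = (k != x.1) && ((k \in x.2) != (j \in x.2)).
Proof. by rewrite inE. Qed.

Definition compatible x y : bool :=
  (x.1 == y.1) || [disjoint far_side x y.1 & far_side y x.1].

Lemma compatible_commute_out (i j : 'I_n) (D E : {set 'I_n}) :
  i \notin D -> j \notin E -> compatible (i, D) (j, E) -> commute_out (i, D) (j, E).
Proof.
move=> hiD hjE; rewrite /compatible /=.
have [eij _ |ij /= /pred0P hc] := eqVneq i j.
  subst j; exists [::] => k /=; rewrite cats0 /ext /pconj_gen.
  have [->|ki] := eqVneq k i; first by eval_words.
  by case hkD: (k \in D); case hkE: (k \in E); eval_words.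
(* the conjugator (a_i a_j)^2 is needed only when j \in D and i \in E *)
case hjD: (j \in D); case hiE: (i \in E);
  [exists [:: i; j; i; j] | exists [::] | exists [::] | exists [::]] => k;
  rewrite /ext /pconj_gen;
  (have [->|ki] := eqVneq k i; [by eval_words|]);
  (have [->|kj] := eqVneq k j; [by eval_words|]).
all: case hkD: (k \in D); case hkE: (k \in E); try by eval_words.
all: by move: (hc k); rewrite !inE hjD hiE; eval_words.
Qed.

(* An inner automorphism commuting the two composites fixes every a_m fixed by
   both partial conjugations, so it is conjugation by 1 or by a_m. *)
Lemma commute_out_fix (i j m : 'I_n) (D E : {set 'I_n}) :
  commute_out (i, D) (j, E) -> m \notin D -> m \notin E ->
  exists2 w, w = [::] \/ w = [:: m] & forall k,
    reduce (ext (pconj_gen (i, D)) (pconj_gen (j, E) k))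
    = reduce (w ++ ext (pconj_gen (j, E)) (pconj_gen (i, D) k) ++ rev w).
Proof.
case=> w H hmD hmE; exists (reduce w) => [|k]; last by rewrite -reduce_conj.
by apply: centralizer_gen; move: (H m); rewrite /ext /pconj_gen; simpl_words => <-.
Qed.

(* Each case picks a generator a_m fixed by both partial conjugations (k, i or j)
   and refutes the two conjugators left by [commute_out_fix] on other generators. *)
Lemma commute_out_compatible (i j : 'I_n) (D E : {set 'I_n}) :
  i \notin D -> j \notin E -> commute_out (i, D) (j, E) -> compatible (i, D) (j, E).
Proof.
move=> hiD hjE hc; rewrite /compatible /=.
have [//|ij] := eqVneq i j; apply/pred0P => k; rewrite /= !inE /=.
apply/negP => /andP[/andP[ki kD] /andP[kj kE]].
case hjD: (j \in D) kD; case hiE: (i \in E) kE;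
  rewrite ?eqb_id ?eqbF_neg ?negbK => kE kD.
- have [w [] -> H] := commute_out_fix hc kD kE;
    by move: (H i); rewrite /ext /pconj_gen; eval_words.
- have [w [] -> H] := commute_out_fix hc hiD (negbT hiE).
    by move: (H k); rewrite /ext /pconj_gen; eval_words.
  by move: (H j); rewrite /ext /pconj_gen; eval_words.
- have [w [] -> H] := commute_out_fix hc (negbT hjD) hjE.
    by move: (H k); rewrite /ext /pconj_gen; eval_words.
  by move: (H i); rewrite /ext /pconj_gen; eval_words.
- have [w [] -> H] := commute_out_fix hc hiD (negbT hiE).
    by move: (H k); rewrite /ext /pconj_gen; eval_words.
  by move: (H j); rewrite /ext /pconj_gen; eval_words.
Qed.

Lemma commute_outP (i j : 'I_n) (D E : {set 'I_n}) : i \notin D -> j \notin E ->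
  commute_out (i, D) (j, E) <-> compatible (i, D) (j, E).
Proof.
by move=> hiD hjE; split; [apply: commute_out_compatible | apply: compatible_commute_out].
Qed.

End Commutation.

Section SimpleWalks.
Variables (n : nat) (E : {set {set 'I_n}}).
Implicit Types (v a b : 'I_n) (vs : seq 'I_n) (es : seq {set 'I_n}).

Definition walk_steps vs es := forall t x, t < size es ->
  (nth x vs t \in nth set0 es t) && (nth x vs t.+1 \in nth set0 es t).

(* [simple_walk] with the default element of [nth] on vertices made arbitrary. *)
Lemma simple_walkP v v' vs es : simple_walk E v v' vs es <->
  [/\ size vs = (size es).+1, head v' vs = v, last v vs = v' &
     [/\ uniq vs, uniq es, all (mem E) es & walk_steps vs es]].
Proof.
split=> -[hs hh hl [hu hue ha he]]; split => //; split => // t.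
  move=> x ht; have h1 : t < size vs by rewrite hs ltnS ltnW.
  have h2 : t.+1 < size vs by rewrite hs.
  by rewrite (set_nth_default v x h1) (set_nth_default v x h2); apply: he.
by move=> ht; apply: he.
Qed.

Lemma simple_walk1 v : simple_walk E v v [:: v] [::].
Proof. by split => //; split. Qed.

Lemma simple_walk_rev v v' vs es : simple_walk E v v' vs es ->
  simple_walk E v' v (rev vs) (rev es).
Proof.
move/simple_walkP=> [hs hh hl [hu hue ha he]]; apply/simple_walkP; split.
- by rewrite !size_rev.
- by case/lastP: vs hs hl {hh hu he} => //= s x _; rewrite rev_rcons last_rcons.
- by case: vs hs hh {hl hu he} => //= y s _ <-; rewrite rev_cons last_rcons.
split; rewrite ?rev_uniq ?all_rev // => t x; rewrite size_rev => ht.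
have h1 : size es - t.+1 < size es by rewrite ltn_subrL; case: (size es) ht.
have := he _ x h1; rewrite andbC.
rewrite !nth_rev ?hs ?size_rev //; last by rewrite ltnS ltnW.
by rewrite subSS -subSn // subSS.
Qed.

Lemma simple_walk_drop v v' vs es a : simple_walk E v v' vs es -> a \in vs ->
  simple_walk E a v' (drop (index a vs) vs) (drop (index a vs) es).
Proof.
move/simple_walkP=> [hs hh hl [hu hue ha he]] av; apply/simple_walkP.
have hk : index a vs < size vs by rewrite index_mem.
split.
- by rewrite !size_drop hs subSn // -ltnS -hs.
- by rewrite -nth0 nth_drop addn0 nth_index.
- rewrite -hl -[in RHS](cat_take_drop (index a vs) vs) last_cat.
  by have := hk; rewrite -subn_gt0 -size_drop; case: (drop _ _).
split; first exact: drop_uniq.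
- exact: drop_uniq.
- by apply/allP => e /mem_drop; apply: (allP ha).
move=> t x; rewrite size_drop ltn_subRL => ht.
by rewrite !nth_drop addnS; apply: he.
Qed.

Lemma simple_walk_take v v' vs es a : simple_walk E v v' vs es -> a \in vs ->
  simple_walk E v a (take (index a vs).+1 vs) (take (index a vs) es).
Proof.
move/simple_walkP=> [hs hh hl [hu hue ha he]] av; apply/simple_walkP.
have hk : index a vs < size vs by rewrite index_mem.
have hk' : index a vs <= size es by rewrite -ltnS -hs.
split.
- by rewrite !size_takel.
- by case: vs hs hh {hl hu he av hk hk'}.
- by rewrite -(nth_last v) size_takel // nth_take // nth_index.
split; first exact: take_uniq.
- exact: take_uniq.
- by apply/allP => e /mem_take; apply: (allP ha).
move=> t x; rewrite size_takel // => ht.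
have h1 : t < (index a vs).+1 by rewrite ltnS ltnW.
rewrite (nth_take _ h1) (nth_take _ (ht : t.+1 < (index a vs).+1)) (nth_take _ ht).
by apply: he; apply: leq_trans hk'.
Qed.

Lemma simple_walk_loop v vs es : simple_walk E v v vs es -> vs = [:: v] /\ es = [::].
Proof.
move=> [hs hh hl [hu _ _ _]].
case: vs hs hh hl hu => // y [|z s] /=; first by case: es => // _ <-.
by move=> _ <- hl /andP[]; rewrite -{1}hl mem_last.
Qed.

Lemma simple_walk_cons p w u vs es : simple_walk E p w vs es -> [set u; p] \in E ->
  u \notin vs -> simple_walk E u w (u :: vs) ([set u; p] :: es).
Proof.
move/simple_walkP=> [hs hh hl [hu hue ha he]] hE uvs; apply/simple_walkP.
split => //=; first by rewrite hs.
  by rewrite -hl; case: vs hs hh hl hu he uvs.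
split => //=; first by rewrite uvs hu.
- rewrite hue andbT; apply/negP => /(nthP set0) [t ht het].
  have h1 : t < size vs by rewrite hs ltnS ltnW.
  have h2 : t.+1 < size vs by rewrite hs.
  have /andP[] := he t u ht; rewrite het !inE.
  have /negbTE -> : nth u vs t != u by apply: contraNneq uvs => <-; apply: mem_nth.
  have /negbTE -> : nth u vs t.+1 != u by apply: contraNneq uvs => <-; apply: mem_nth.
  move=> /eqP e1 /eqP e2.
  by move: (nth_uniq u h1 h2 hu); rewrite e1 e2 eqxx => /esym /eqP /n_Sn.
- by rewrite hE.
move=> [|t] x /= ht; last exact: he.
rewrite !inE eqxx /=; case: vs hs hh {hl hu he uvs} => //= y s _ ->.
by rewrite eqxx orbT.
Qed.

Lemma simple_walk_behead u x v s e es :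
  simple_walk E u v (u :: x :: s) (e :: es) -> simple_walk E x v (x :: s) es.
Proof.
move/simple_walkP=> [[hs] hh hl [/andP[_ hu] /andP[_ hue] /andP[_ ha] he]].
by apply/simple_walkP; split; rewrite /= ?hs //; split => // t y; apply: (he t.+1 y).
Qed.

Lemma simple_walk_first u x v s e es :
  simple_walk E u v (u :: x :: s) (e :: es) -> [/\ e \in E, u \in e, x \in e & u != x].
Proof.
move/simple_walkP=> [_ _ _ [/andP[+ _] _ /andP[he _] hst]].
rewrite inE negb_or => /andP[ux _].
by case/andP: (hst 0 u erefl).
Qed.

Lemma simple_walk_cut v v' vs es (i : 'I_n) (D : {set 'I_n}) :
  simple_walk E v v' vs es ->
  (forall e, e \in E -> forall a b, a \in e -> b \in e -> a != i -> b != i ->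
     (a \in D) = (b \in D)) ->
  v \in D -> v' \notin D -> i \in vs.
Proof.
move/simple_walkP=> [hs hh hl [hu hue ha he]] hcut vD; apply: contraNT => ivs.
suff H : forall t, t < size vs -> nth v vs t \in D.
  by rewrite -hl -nth_last; apply: H; rewrite hs.
elim=> [|t IH] ht; first by case: (vs) hh ht => //= y s ->.
have ht' : t < size es by rewrite -ltnS -hs.
have /andP[h1 h2] := he t v ht'.
have hE : nth set0 es t \in E by apply: (allP ha); apply: mem_nth.
rewrite -(hcut _ hE _ _ h1 h2) ?IH 1?ltnW //.
  by apply: contraNneq ivs => <-; apply: mem_nth; rewrite ltnW.
by apply: contraNneq ivs => <-; apply: mem_nth.
Qed.

End SimpleWalks.

Section CarriedCompatible.
Variables (n : nat) (E : {set {set 'I_n}}).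

Lemma carries_separated (i : 'I_n) (D : {set 'I_n}) : carries E (i, D) ->
  forall d j vs es, d != i -> j != i -> (d \in D) != (j \in D) ->
  simple_walk E d j vs es -> i \in vs.
Proof.
move=> hc d j vs es di ji; case hd: (d \in D); case hj: (j \in D) => // _ hw.
  by apply: (hc d j) hw; rewrite ?hd ?hj.
by rewrite -mem_rev; apply: (hc j d) (simple_walk_rev hw); rewrite ?hd ?hj.
Qed.

(* A vertex k in both far sides puts i on the walk from k to j, and j on its
   part before i, so j would not be the last vertex of the walk. *)
Lemma carries_compatible (x y : 'I_n * {set 'I_n}) :
  hypertree E -> carries E x -> carries E y -> compatible x y.
Proof.
case: x y => i D [j F] [_ hT] hcx hcy; rewrite /compatible /=.
have [//|ij] := eqVneq i j; apply/pred0P => k /=; rewrite !inE.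
apply/negP => /andP[/andP[ki kD] /andP[kj kF]].
have [[vs es] [hw _]] := hT k j.
have ivs : i \in vs by apply: (carries_separated hcx) hw; rewrite // eq_sym.
have jin : j \in take (index i vs).+1 vs.
  by apply: (carries_separated hcy) (simple_walk_take hw ivs).
case: hw => hs _ hl [hu _ _ _].
have hj : index j vs = (size vs).-1 by rewrite -hl -(nth_last k) index_uniq // hs.
have hi : index i vs <= (size vs).-1 by rewrite -ltnS prednK ?index_mem // hs.
have ji : index j vs <= index i vs by rewrite -ltnS; apply: index_ltn.
have eij : index i vs = index j vs by apply/eqP; rewrite eqn_leq ji hj hi.
by move: ij; rewrite -(nth_index k ivs) eij nth_index ?eqxx // -index_mem hj hs.
Qed.

End CarriedCompatible.

Definition respects n (x : 'I_n * {set 'I_n}) (u v : 'I_n) : Prop :=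
  [\/ (u \in x.2) = (v \in x.2), x.1 = u | x.1 = v].

Section ParentTree.
Variables (n : nat) (par : 'I_n -> 'I_n) (rk : 'I_n -> nat) (r : 'I_n).
(* [rk] increases strictly along [par], so iterating [par] reaches [r]. *)
Hypotheses (par_root : par r = r) (rk_par : forall v, v != r -> rk v < rk (par v)).

Definition parent_edges : {set {set 'I_n}} :=
  [set [set v; par v] | v in [set v | v != r]].

Lemma parent_neq v : v != r -> par v != v.
Proof. by move=> /rk_par h; apply/eqP => e; rewrite e ltnn in h. Qed.

Lemma rk_par_le v : rk v <= rk (par v).
Proof. by have [->|/rk_par/ltnW //] := eqVneq v r; rewrite par_root. Qed.

Lemma parent_edge v : v != r -> [set v; par v] \in parent_edges.
Proof. by move=> hv; apply/imsetP; exists v; rewrite ?inE. Qed.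

Lemma parent_edgesP e : e \in parent_edges -> exists2 v, v != r & e = [set v; par v].
Proof. by case/imsetP => v; rewrite inE; exists v. Qed.

Definition parent_adj (a b : 'I_n) := (a != r /\ b = par a) \/ (b != r /\ a = par b).

Lemma parent_edges_adj e a b : e \in parent_edges -> a \in e -> b \in e -> a != b ->
  parent_adj a b.
Proof.
case/parent_edgesP => v hv ->; rewrite !inE.
by case/orP=> /eqP -> /orP [] /eqP ->; rewrite ?eqxx //= => _; [left | right].
Qed.

Lemma parent_edges_eq e a b : e \in parent_edges -> a \in e -> b \in e -> a != b ->
  e = [set a; b].
Proof.
case/parent_edgesP => v hv ->; rewrite !inE.
by case/orP=> /eqP -> /orP [] /eqP ->; rewrite ?eqxx //= => _; rewrite setUC.
Qed.

Lemma parent_edges_hypergraph : hypergraph parent_edges.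
Proof.
apply/forall_inP => e /parent_edgesP [v hv ->].
by rewrite cards2 eq_sym parent_neq.
Qed.

Lemma parent_ind (P : 'I_n -> Prop) :
  P r -> (forall v, v != r -> P (par v) -> P v) -> forall v, P v.
Proof.
move=> Pr IHP; pose N := \max_(v : 'I_n) rk v.
suff H k v : N - rk v <= k -> P v by move=> v; apply: (H _ v (leqnn _)).
elim: k v => [|k IH] v hk; have [->|hv] := eqVneq v r => //.
all: have h1 := rk_par hv; have h2 : rk (par v) <= N by apply: leq_bigmax.
  exfalso; lia.
by apply: IHP hv (IH _ _); lia.
Qed.

Lemma parent_walk_step p w u vs es : simple_walk parent_edges p w vs es ->
  [set u; p] \in parent_edges -> exists vs' es', simple_walk parent_edges u w vs' es'.
Proof.
move=> hw hE; case uvs: (u \in vs).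
  exists (drop (index u vs) vs), (drop (index u vs) es).
  exact: simple_walk_drop hw uvs.
by exists (u :: vs), ([set u; p] :: es); apply: simple_walk_cons; rewrite ?uvs.
Qed.

Lemma parent_walk_exists u w : exists vs es, simple_walk parent_edges u w vs es.
Proof.
have to_root v : exists vs es, simple_walk parent_edges v r vs es.
  elim/parent_ind: v => [|v hv [vs [es hw]]].
    by exists [:: r], [::]; apply: simple_walk1.
  exact: parent_walk_step hw (parent_edge hv).
elim/parent_ind: u => [|u hu [vs [es hw]]].
  by have [vs [es hw]] := to_root w; exists (rev vs), (rev es); apply: simple_walk_rev.
exact: parent_walk_step hw (parent_edge hu).
Qed.

Definition ancestor x w := exists k, iter k par w = x.

Lemma ancestor_refl x : ancestor x x.
Proof. by exists 0. Qed.

Lemma ancestor_par x w : ancestor x (par w) -> ancestor x w.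
Proof. by case=> k hk; exists k.+1; rewrite iterSr. Qed.

Lemma ancestor_rk x w : ancestor x w -> rk w <= rk x.
Proof.
case=> k; elim: k w => [|k IH] w; first by move=> /= ->.
by rewrite iterSr => h; apply: leq_trans (rk_par_le w) (IH _ h).
Qed.

Lemma ancestor_inv x w : ancestor x w -> w = x \/ ancestor x (par w).
Proof. by case=> [[|k]] h; [left | right; exists k; rewrite -iterSr]. Qed.

Lemma parent_walk_adj v v' vs es t x : simple_walk parent_edges v v' vs es ->
  t.+1 < size vs -> parent_adj (nth x vs t) (nth x vs t.+1).
Proof.
move/simple_walkP=> [hs hh hl [hu hue ha he]] ht.
have ht' : t < size es by rewrite -ltnS -hs.
case/andP: (he t x ht') => h1 h2.
apply: (parent_edges_adj _ h1 h2); first by apply: (allP ha); apply: mem_nth.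
by rewrite nth_uniq ?ltn_eqF // ltnW.
Qed.

(* A simple walk that steps down from u to its child x1 can never climb back
   through u, so it stays in the subtree of x1. *)
Lemma walk_down_stays_below u v s es x1 :
  simple_walk parent_edges u v (u :: x1 :: s) es ->
  x1 != r -> par x1 = u -> ancestor x1 v.
Proof.
move=> hw hx1 hp; have [_ _ hl [hu _ _ _]] := hw.
have us : u \notin x1 :: s by case/andP: hu.
suff H t : t < size (x1 :: s) -> ancestor x1 (nth x1 (x1 :: s) t).
  by have := H (size s) (leqnn _); rewrite -last_nth -hl.
elim: t => [|t IH] ht; first exact: ancestor_refl.
have : parent_adj (nth x1 (x1 :: s) t) (nth x1 (x1 :: s) t.+1).
  exact: parent_walk_adj x1 hw (ht : t.+2 < size (u :: x1 :: s)).
have := IH (ltnW ht); move: (mem_nth x1 ht).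
move: (nth x1 (x1 :: s) t) (nth x1 (x1 :: s) t.+1) => y z hz hy.
case=> [[_ ez]|[_ hyz]]; last by apply: ancestor_par; rewrite -hyz.
case: (ancestor_inv hy) => [ey|]; last by rewrite ez.
have ezu : z = u by rewrite ez ey hp.
by rewrite -ezu hz in us.
Qed.

(* Leaving u other than towards its child x1, a simple walk never enters the
   subtree of x1: its only entrance is the edge {u, x1}. *)
Lemma walk_avoids_subtree u v s es x1 x2 :
  simple_walk parent_edges u v (u :: x2 :: s) es ->
  x1 != r -> par x1 = u -> x2 != x1 -> ~ ancestor x1 v.
Proof.
move=> hw hx1 hp hx12; have [_ _ hl [hu _ _ _]] := hw.
have us : u \notin x2 :: s by case/andP: hu.
have hru : rk x1 < rk u by rewrite -hp; apply: rk_par.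
suff H t : t < size (x2 :: s) -> ~ ancestor x1 (nth x2 (x2 :: s) t).
  by have := H (size s) (leqnn _); rewrite -last_nth -hl.
elim: t => [|t IH] ht.
  have := parent_walk_adj x2 hw (ht : 1 < size (u :: x2 :: s)); rewrite /= => hadj hd.
  case: hadj => [[hu' ex2]|[hx2 eu]].
    have := ancestor_rk hd; have := rk_par hu'; rewrite -ex2; lia.
  case: (ancestor_inv hd) => [e|hd']; first by rewrite e eqxx in hx12.
  by have := ancestor_rk hd'; rewrite -eu leqNgt hru.
have : parent_adj (nth x2 (x2 :: s) t) (nth x2 (x2 :: s) t.+1).
  exact: parent_walk_adj x2 hw (ht : t.+2 < size (u :: x2 :: s)).
have := IH (ltnW ht); move: (mem_nth x2 (ltnW ht)) (mem_nth x2 ht).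
move: (nth x2 (x2 :: s) t) (nth x2 (x2 :: s) t.+1) => y z hyin hz hy.
case=> [[_ ->]|[hzr hyz]]; first by move=> /ancestor_par.
move=> hd; case: (ancestor_inv hd) => [ez|]; last by rewrite -hyz.
by rewrite ez hp in hyz; rewrite -hyz hyin in us.
Qed.

(* Two distinct first steps from u cannot both lead to v: one of them goes down
   to a child x of u, after which the walk stays below x, while the other walk
   never enters the subtree of x. *)
Lemma parent_walk_uniq vs1 es1 vs2 es2 u v : simple_walk parent_edges u v vs1 es1 ->
  simple_walk parent_edges u v vs2 es2 -> vs1 = vs2 /\ es1 = es2.
Proof.
elim: vs1 u es1 vs2 es2 => [|y s1 IH] u es1 vs2 es2 h1 h2; first by case: h1.
have [hs1 /= hh1 hl1 _] := h1; subst y.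
case: s1 IH hs1 hl1 h1 => [|x1 t1] IH hs1 hl1 h1.
  case: es1 hs1 h1 => // _ h1; move: hl1 => /= hv; rewrite -hv in h2.
  by case: (simple_walk_loop h2) => -> ->.
case: es1 hs1 h1 => // e1 f1 _ h1.
have [hs2 hh2 hl2 _] := h2.
case: vs2 hs2 hh2 hl2 h2 => // y2 s2 hs2 /= hh2 hl2 h2; subst y2.
case: s2 hs2 hl2 h2 => [|x2 t2] hs2 hl2 h2.
  by move: hl2 => /= hv; rewrite -hv in h1; case: (simple_walk_loop h1).
case: es2 hs2 h2 => // e2 f2 _ h2.
have [he1 hu1 hx1 ux1] := simple_walk_first h1.
have [he2 hu2 hx2 ux2] := simple_walk_first h2.
have [ex|nx] := eqVneq x1 x2.
  subst x2; have ee : e1 = e2.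
    by rewrite (parent_edges_eq he1 hu1 hx1 ux1) (parent_edges_eq he2 hu2 hx2 ux2).
  subst e2.
  by case: (IH _ _ _ _ (simple_walk_behead h1) (simple_walk_behead h2)) => -> ->.
case: (parent_edges_adj he1 hu1 hx1 ux1) => [[hur ex1]|[hx1r ep1]].
  case: (parent_edges_adj he2 hu2 hx2 ux2) => [[_ ex2]|[hx2r ep2]].
    by rewrite ex1 ex2 eqxx in nx.
  case: (walk_avoids_subtree h1 hx2r (esym ep2) nx).
  exact: (walk_down_stays_below h2 hx2r (esym ep2)).
case: (walk_avoids_subtree h2 hx1r (esym ep1)); first by rewrite eq_sym.
exact: (walk_down_stays_below h1 hx1r (esym ep1)).
Qed.

Lemma parent_edges_hypertree : hypertree parent_edges.
Proof.
split; first exact: parent_edges_hypergraph.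
move=> u v; have [vs [es hw]] := parent_walk_exists u v.
exists (vs, es); split => // -[vs' es'] /= h.
by case: (parent_walk_uniq hw h) => -> ->.
Qed.

Lemma parent_edges_carries (x : 'I_n * {set 'I_n}) :
  (forall v, v != r -> respects x v (par v)) -> carries parent_edges x.
Proof.
move=> hx d j hd hj ji vs es hw; apply: (simple_walk_cut hw _ hd hj).
move=> e /parent_edgesP [v hv ->] a b; rewrite !inE.
have key : v != x.1 -> par v != x.1 -> (v \in x.2) = (par v \in x.2).
  by case: (hx v hv) => // ->; rewrite eqxx.
by case/orP=> /eqP -> /orP [] /eqP -> ai bi //; rewrite key.
Qed.

End ParentTree.

Section Construction.
Variables (n : nat) (xs : seq ('I_n * {set 'I_n})).
Implicit Types (S : {set 'I_n}) (x : 'I_n * {set 'I_n}).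

Definition unsplit S x := [forall a in S :\ x.1, [disjoint far_side x a & S]].

Definition splits S x := (x.1 \in S) && ~~ unsplit S x.

Definition carrying_tree S (par : 'I_n -> 'I_n) (rk : 'I_n -> nat) (r : 'I_n) :=
  [/\ r \in S, par r = r,
      forall v, v \in S -> v != r -> par v \in S /\ rk v < rk (par v) &
      forall x v, x \in xs -> v \in S -> v != r -> respects x v (par v)].

Lemma unsplit_same S x a b : unsplit S x -> a \in S -> b \in S ->
  a != x.1 -> b != x.1 -> (a \in x.2) = (b \in x.2).
Proof.
move=> /forall_inP hS aS bS ax bx.
have := disjointFl (hS a _) bS.
by rewrite !inE ax bx aS /= => /(_ isT) /negbFE /eqP ->.
Qed.

Lemma unsplitS S S' x : S' \subset S -> unsplit S x -> unsplit S' x.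
Proof.
move=> sS /forall_inP hS; apply/forall_inP => a; rewrite !inE => /andP[ax aS'].
by apply: (disjointWr sS (hS a _)); rewrite !inE ax (subsetP sS).
Qed.

Lemma splits_far_side S x m : splits S x -> far_side x m :&: S != set0.
Proof.
case/andP=> _; rewrite negb_forall_in => /exists_inP [a].
rewrite !inE => /andP[ax aS] /pred0Pn [b /andP[+ bS]].
rewrite /= mem_far_side => /andP[bx ba].
apply/set0Pn; case: (boolP ((a \in x.2) == (m \in x.2))) => [/eqP am|am].
  by exists b; rewrite inE mem_far_side bx -am ba.
by exists a; rewrite inE mem_far_side ax aS am.
Qed.

Lemma star_carrying_tree S : S != set0 -> (forall x, x \in xs -> unsplit S x) ->
  exists par rk r, carrying_tree S par rk r.
Proof.
move=> /set0Pn [r rS] hS.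
exists (fun _ => r), (fun v => nat_of_bool (v == r)), r; split => //.
  by move=> v vS vr; rewrite (negbTE vr) eqxx.
move=> x v hx vS vr.
have [<-|xv] := eqVneq x.1 v; first exact: Or32.
have [<-|xr] := eqVneq x.1 r; first exact: Or33.
by apply: Or31; apply: (unsplit_same (hS x hx)); rewrite // eq_sym.
Qed.

Lemma graft_carrying_tree S par rk r l p : carrying_tree (S :\ l) par rk r ->
  l \in S -> p \in S :\ l -> (forall x, x \in xs -> respects x l p) ->
  carrying_tree S (fun v => if v == l then p else par v)
                  (fun v => if v == l then 0 else (rk v).+1) r.
Proof.
move=> [rS' par_r hpar hresp] lS pS' hlp.
have rl : (r == l) = false by move: rS'; rewrite !inE => /andP[/negbTE].
split => [||v vS vr|x v hx vS vr].
- by move: rS'; rewrite !inE => /andP[].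
- by rewrite rl.
- case: ifP => [_|vl]; first by move: pS'; rewrite !inE => /andP[/negbTE -> ->].
  have vS' : v \in S :\ l by rewrite !inE vl vS.
  have [] := hpar v vS' vr; rewrite !inE => /andP[/negbTE pl pS] hrk.
  by rewrite pl pS.
- case: ifP => [/eqP -> | vl]; first exact: hlp.
  by apply: hresp; rewrite // !inE vl vS.
Qed.

Hypothesis xs_compatible : forall x y, x \in xs -> y \in xs -> compatible x y.

Lemma far_side_compatible x y k : x \in xs -> y \in xs -> x.1 != y.1 ->
  k \in far_side x y.1 -> k \notin far_side y x.1.
Proof.
move=> hx hy xy hk; have := xs_compatible hx hy; rewrite /compatible (negbTE xy) /=.
by move/pred0P/(_ k); rewrite /= hk /= => ->.
Qed.

Section MinimalSplitter.
Variables (S : {set 'I_n}) (x0 : 'I_n * {set 'I_n}) (m : 'I_n).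
Hypotheses (x0_xs : x0 \in xs) (x0_splits : splits S x0).
Hypothesis x0_minimal : forall x m', x \in xs -> splits S x ->
  #|far_side x0 m :&: S| <= #|far_side x m' :&: S|.

(* Otherwise, by compatibility with x0, the side of x away from x0.1 would meet
   S inside (far_side x0 m :&: S) :\ x.1, contradicting minimality. *)
Lemma minimal_side_unsplit x : x \in xs -> x.1 \in far_side x0 m :&: S ->
  unsplit S x.
Proof.
move=> hx xA; apply/negPn/negP => hsplit.
have xS : x.1 \in S by move: xA; rewrite inE => /andP[].
have xm : x.1 \in far_side x0 m by move: xA; rewrite inE => /andP[].
have x0x : x0.1 != x.1 by move: xm; rewrite mem_far_side eq_sym => /andP[].
have sub : far_side x x0.1 :&: S \subset (far_side x0 m :&: S) :\ x.1.
  apply/subsetP => z; rewrite inE => /andP[zfar zS].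
  have := far_side_compatible hx x0_xs _ zfar; rewrite eq_sym x0x => /(_ isT).
  move: zfar xm; rewrite !inE zS => /andP[zx zx0] /andP[_ xm].
  have z0 : z != x0.1 by apply/eqP => ez; rewrite ez eqxx in zx0.
  rewrite zx z0 /=; move: xm.
  by case: (z \in x0.2); case: (x.1 \in x0.2); case: (m \in x0.2).
have hxs : splits S x by rewrite /splits xS.
have := leq_trans (x0_minimal x0.1 hx hxs) (subset_leq_card sub).
by rewrite leqNgt (cardsD1 x.1 (_ :&: S)) xA add1n ltnSn.
Qed.

(* Any x splitting S is centered on the other side of x0, and compatibility then
   puts l and x0.1 on the same side of x. *)
Lemma minimal_side_respects l : l \in far_side x0 m :&: S ->
  (forall x, x \in xs -> x.1 \notin S -> unsplit S x) ->
  forall x, x \in xs -> respects x l x0.1.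
Proof.
move=> lA hout x hx.
have lS : l \in S by move: lA; rewrite inE => /andP[].
have x0S : x0.1 \in S by case/andP: x0_splits.
have [<-|xl] := eqVneq x.1 l; first exact: Or32.
have [<-|x0x] := eqVneq x.1 x0.1; first exact: Or33.
apply: Or31; have [hu|hsplit] := boolP (unsplit S x).
  by apply: (unsplit_same hu); rewrite // eq_sym.
have xS : x.1 \in S by apply: contraR hsplit => /hout ->.
have xA : x.1 \notin far_side x0 m.
  by apply: contra hsplit => xm; apply: minimal_side_unsplit; rewrite // inE xm.
have lx : l \in far_side x0 x.1.
  move: lA xA; rewrite inE !mem_far_side x0x => /andP[/andP[-> +] _] /=.
  by case: (l \in x0.2); case: (x.1 \in x0.2); case: (m \in x0.2).
have := far_side_compatible x0_xs hx _ lx; rewrite eq_sym x0x => /(_ isT).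
by rewrite mem_far_side eq_sym xl /= negbK => /eqP.
Qed.

End MinimalSplitter.

Lemma carrying_tree_exists S : S != set0 ->
  (forall x, x \in xs -> x.1 \notin S -> unsplit S x) ->
  exists par rk r, carrying_tree S par rk r.
Proof.
have [k] := ubnP #|S|; elim: k S => // k IH S hk hS hout.
have [hsplit|] := boolP (has (splits S) xs); last first.
  move/hasPn=> hun; apply: star_carrying_tree => // x hx.
  case xS: (x.1 \in S); last by apply: hout; rewrite ?xS.
  by move: (hun x hx); rewrite /splits xS negbK.
have ex : exists c,
    has (fun x => splits S x && [exists m, #|far_side x m :&: S| == c]) xs.
  case/hasP: hsplit => x hx hxS; exists #|far_side x x.1 :&: S|.
  by apply/hasP; exists x; rewrite // hxS; apply/existsP; exists x.1.
case: (ex_minnP ex) => c /hasP[x0 hx0 /andP[x0S /existsP[m /eqP cm]]] cmin.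
have x0_minimal x m' : x \in xs -> splits S x ->
    #|far_side x0 m :&: S| <= #|far_side x m' :&: S|.
  move=> hx hxS; rewrite cm; apply: cmin; apply/hasP; exists x => //.
  by rewrite hxS; apply/existsP; exists m'.
have [l lA] := set0Pn _ (splits_far_side m x0S).
have lS : l \in S by move: lA; rewrite inE => /andP[].
have lx0 : l != x0.1 by move: lA; rewrite !inE => /andP[/andP[]].
have x0S' : x0.1 \in S :\ l by case/andP: x0S; rewrite !inE eq_sym lx0 => ->.
have hout' x : x \in xs -> x.1 \notin S :\ l -> unsplit (S :\ l) x.
  move=> hx; rewrite !inE negb_and negbK => /orP[/eqP xl | xS];
    apply: (unsplitS (subsetDl S [set l])); last exact: hout.
  by apply: (minimal_side_unsplit hx0 x0_minimal hx); rewrite xl.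
have [|||par [rk [r tree]]] := IH (S :\ l).
- by move: hk; rewrite (cardsD1 l S) lS.
- by apply/set0Pn; exists x0.1.
- exact: hout'.
do 2 eexists; exists r; apply: (graft_carrying_tree tree lS x0S').
exact: (minimal_side_respects hx0 x0S x0_minimal lA hout).
Qed.

End Construction.

Theorem theorem3p6 (n : nat) (hn : 3 <= n) (xs : seq ('I_n * {set 'I_n}))
  (hxs : all (@pconj_valid n) xs) :
  (exists E : {set {set 'I_n}}, hypertree E /\ forall x, x \in xs -> carries E x)
  <-> (forall x y, x \in xs -> y \in xs -> commute_out x y).
Proof.
have commute_compatible (x y : 'I_n * {set 'I_n}) : x \in xs -> y \in xs ->
    commute_out x y <-> compatible x y.
  case: x y => [i D] [j F] hx hy.
  have /andP[hiD _] := allP hxs _ hx; have /andP[hjF _] := allP hxs _ hy.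
  exact: commute_outP.
split=> [[E [hT hc]] x y hx hy | hcom].
  by apply/(commute_compatible x y hx hy)/carries_compatible; [|apply: hc..].
have hcomp x y : x \in xs -> y \in xs -> compatible x y.
  by move=> hx hy; apply/(commute_compatible x y hx hy)/hcom.
have [||par [rk [r [_ par_r hpar hresp]]]] :=
  carrying_tree_exists hcomp (S := [set: 'I_n]).
- by apply/set0Pn; exists (Ordinal (leq_trans (isT : 0 < 3) hn)).
- by move=> x _; rewrite inE.
have rk_par v : v != r -> rk v < rk (par v) by case/(hpar v (in_setT v)).
exists (parent_edges par r); split; first exact: parent_edges_hypertree par_r rk_par.
by move=> x hx; apply: parent_edges_carries => v vr; apply: hresp.
Qed.
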